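(* Let $n\ge 1$ and let $r_1,\ldots,r_n$ be independent Rademacher random variables (each equal to $\pm1$ with probability $1/2$). For $x\in\mathbb{R}^n$ and a positive integer $q$ define $$\mathbf{R}_q(x) = \mathbf{E}\Big(\sum_{i\neq j} x_i x_j r_i r_j\Big)^q,$$ where the sum runs over ordered pairs $(i,j)$ with $i,j\in\{1,\ldots,n\}$, $i\ne j$. Then for every positive integer $q$, $\mathbf{R}_q(x)$ is a Schur-concave function of $(x_1^2,\ldots,x_n^2)$.
   Context: A function $f$ on $[0,\infty)^n$ is Schur-concave if $f(a)\ge f(b)$ whenever $a$ is majorized by $b$ (the sum of the $k$ largest entries of $a$ is at most that of $b$ for every $k$, with equal total sums). *)

From mathcomp Require Import all_boot all_order all_algebra.
Set Implicit Arguments. Unset Strict Implicit. Unset Printing Implicit Defensive.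
Import Order.TTheory GRing.Theory Num.Theory.
Local Open Scope ring_scope.

Definition rsign {R : numDomainType} (b : bool) : R := if b then 1 else -1.

Definition chaos {R : numDomainType} (n : nat) (x : 'I_n -> R)
  (r : {ffun 'I_n -> bool}) : R :=
  \sum_(i < n) \sum_(j < n | i != j) x i * x j * rsign (r i) * rsign (r j).

(* R_q(x) = E (sum_{i<>j} x_i x_j r_i r_j)^q, where (r_1..r_n) are independent
   Rademacher variables, i.e. uniformly distributed on {-1,1}^n. *)
Definition Rq {R : numFieldType} (n q : nat) (x : 'I_n -> R) : R :=
  (2 ^+ n)^-1 * \sum_(r : {ffun 'I_n -> bool}) chaos x r ^+ q.

Definition sum_largest {R : realDomainType} (n k : nat) (a : 'I_n -> R) : R :=
  \sum_(v <- take k (sort (fun u w : R => w <= u) [seq a i | i <- enum 'I_n])) v.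

Definition majorized {R : realDomainType} (n : nat) (a b : 'I_n -> R) : Prop :=
  (forall k : nat, (k <= n)%N -> sum_largest k a <= sum_largest k b) /\
  \sum_(i < n) a i = \sum_(i < n) b i.

Definition schur_concave {R : realDomainType} (n : nat) (f : ('I_n -> R) -> R) : Prop :=
  forall a b : 'I_n -> R, (forall i, 0 <= a i) -> (forall i, 0 <= b i) ->
    majorized a b -> f b <= f a.

(* Write a_i = x_i^2 and let E be the linear functional on polynomials sending
   a monomial X^m to the expectation of prod_i (x_i r_i)^(m_i), that is to the
   product of the a_i^(m_i/2), or to 0 if some m_i is odd.  Then
   R_q(x) = E(C^q) for C = sum_(u <> v) X_u X_v, and E depends on a only.  By
   the T-transform description of majorization, Schur-concavity in a reduces to
   checking that spreading two coordinates a_i, a_j apart (same sum, smaller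
   product) does not increase E(C^q).  Write C = 2 X_i X_j + 2 (X_i + X_j) Z + W
   with Z, W free of X_i, X_j.  Under E the square (X_i + X_j)^2 may be replaced
   by a_i + a_j + 2 X_i X_j, so E(C^q) is a combination, with coefficients
   E(Z^h W^l) >= 0, of polynomials in a_i + a_j and a_i a_j with nonnegative
   coefficients; it is thus nondecreasing in a_i a_j when a_i + a_j is fixed. *)

From HB Require Import structures.
From mathcomp Require Import all_boot all_order all_algebra.
From mathcomp Require Import fingroup perm.
From mathcomp Require Import ring lra.
From mathcomp.multinomials Require Import mpoly.
From Stdlib Require Import FunctionalExtensionality.
Import Order.TTheory GRing.Theory Num.Theory.
Local Open Scope ring_scope.
Set Implicit Arguments. Unset Strict Implicit. Unset Printing Implicit Defensive.

Section Spread.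
Variables (R : realDomainType) (n : nat).
Implicit Types (a b : 'I_n -> R) (F : ('I_n -> R) -> R).

(* With equal sums, [b i * b j <= a i * a j] says that [b i], [b j] lie further
   apart than [a i], [a j]: [a] is a T-transform of [b]. *)
Definition spread (i j : 'I_n) a b :=
  [/\ i != j, forall k, k != i -> k != j -> b k = a k,
      b i + b j = a i + a j & b i * b j <= a i * a j].

Definition spread_antitone F := forall a b i j,
  (forall k, 0 <= a k) -> (forall k, 0 <= b k) -> spread i j a b -> F b <= F a.

Lemma spread_antitone_tperm F a (i j : 'I_n) : spread_antitone F ->
  (forall k, 0 <= a k) -> F (a \o tperm i j) = F a.
Proof.
move=> hF a0; have [<-|ij] := eqVneq i j.
  by f_equal; apply: functional_extensionality => k; rewrite /= tperm1 perm1.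
have swap_spread c : spread i j c (c \o tperm i j).
  rewrite /spread; split=> //=; rewrite ?tpermL ?tpermR 1?addrC 1?mulrC //.
  by move=> k ki kj; rewrite tpermD //; rewrite eq_sym.
have swapK : (a \o tperm i j) \o tperm i j = a.
  by apply: functional_extensionality => k; rewrite /= tpermK.
have a'0 k : 0 <= (a \o tperm i j) k := a0 _.
apply/le_anti/andP; split; first exact: hF _ _ _ _ a0 a'0 (swap_spread a).
by rewrite -{1}swapK; exact: hF _ _ _ _ a'0 (fun k => a'0 _) (swap_spread _).
Qed.

Lemma spread_antitone_perm F a (s : 'S_n) : spread_antitone F ->
  (forall k, 0 <= a k) -> F (a \o s) = F a.
Proof.
move=> hF; have [ts -> _] := prod_tpermP s; elim: ts a => [|t ts IH] a a0.
  by f_equal; apply: functional_extensionality => k; rewrite /= big_nil perm1.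
have -> : a \o (\prod_(t0 <- t :: ts) tperm t0.1 t0.2)%g =
          (a \o (\prod_(t0 <- ts) tperm t0.1 t0.2)%g) \o tperm t.1 t.2.
  by apply: functional_extensionality => k; rewrite /= big_cons permM.
by rewrite spread_antitone_tperm ?IH // => k; apply: a0.
Qed.

Definition psum a m := \sum_(k < n | (k < m)%N) a k.

Definition prefix_majorized a b :=
  (forall m, (m <= n)%N -> psum a m <= psum b m) /\ psum a n = psum b n.

Lemma psum_total a : psum a n = \sum_k a k.
Proof. by apply: eq_bigl => k; rewrite ltn_ord. Qed.

Lemma psumB a b m : psum (fun k => b k - a k) m = psum b m - psum a m.
Proof. exact: sumrB. Qed.

Lemma psumS a (j : 'I_n) : psum a j.+1 = psum a j + a j.
Proof.
rewrite /psum (bigD1 j) ?ltnSn //= addrC; congr (_ + _).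
by apply: eq_bigl => k; rewrite ltnS ltn_neqAle andbC.
Qed.

Lemma psum_gap0 a (j : 'I_n) m : (j < m)%N ->
  (forall l : 'I_n, (j < l < m)%N -> a l = 0) -> psum a m = psum a j.+1.
Proof.
move=> jm gap0; rewrite /psum (bigID (fun k : 'I_n => (k < j.+1)%N)) /=.
rewrite [X in _ + X]big1 ?addr0 => [|k /andP[km]]; last first.
  by rewrite -leqNgt => jk; apply: gap0; rewrite jk.
apply: eq_bigl => k; have [kj|_] := ltnP k j.+1; last by rewrite andbF.
by rewrite andbT (leq_trans kj jm).
Qed.

Lemma sum_indicator (P : pred 'I_n) (j : 'I_n) :
  \sum_(k | P k) (k == j)%:R = (P j)%:R :> R.
Proof.
have [Pj|nPj] := boolP (P j).
  by rewrite (bigD1 j) //= eqxx big1 ?addr0 // => k /andP[_ /negbTE ->].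
rewrite big1 // => k Pk; have /negbTE -> // : k != j.
by apply: contraNneq nPj => <-.
Qed.

Definition transfer b (j k : 'I_n) d : 'I_n -> R :=
  fun l => b l - d * (l == j)%:R + d * (l == k)%:R.

Lemma psum_transfer b j k d m :
  psum (transfer b j k d) m = psum b m - d * (j < m)%:R + d * (k < m)%:R.
Proof. by rewrite /psum !big_split /= sumrN -!mulr_sumr !sum_indicator. Qed.

Section TransferValues.
Variables (b : 'I_n -> R) (j k : 'I_n) (d : R).
Hypothesis jk : j != k.

Lemma transfer_l : transfer b j k d j = b j - d.
Proof. by rewrite /transfer eqxx (negbTE jk) /=; ring. Qed.

Lemma transfer_r : transfer b j k d k = b k + d.
Proof. by rewrite /transfer eqxx eq_sym (negbTE jk) /=; ring. Qed.

Lemma transfer_out l : l != j -> l != k -> transfer b j k d l = b l.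
Proof. by move=> /negbTE lj /negbTE lk; rewrite /transfer lj lk /=; ring. Qed.

Lemma transfer_spread : 0 <= d -> b k + d <= b j - d -> spread j k (transfer b j k d) b.
Proof.
move=> d0 dkj; split=> //; first by move=> l lj lk; rewrite transfer_out.
  by rewrite transfer_l transfer_r; ring.
by rewrite transfer_l transfer_r; nra.
Qed.

End TransferValues.

Lemma transfer_prefix_majorized a b (j k : 'I_n) d :
  prefix_majorized a b -> (j < k)%N -> (forall l : 'I_n, (j < l < k)%N -> b l = a l) ->
  d <= b j - a j -> prefix_majorized a (transfer b j k d).
Proof.
move=> [pre tot] jk mid dj; split=> [m mn|]; last by rewrite psum_transfer !ltn_ord tot; ring.
rewrite psum_transfer; have [km|mk] := ltnP k m.
  by rewrite (ltn_trans jk km) addrNK pre.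
rewrite mulr0 addr0; have [jm|mj] := ltnP j m; last by rewrite mulr0 subr0 pre.
have gap : psum (fun l => b l - a l) m = psum (fun l => b l - a l) j.+1.
  apply: psum_gap0 => // l /andP[jl lm]; rewrite mid ?subrr //.
  by rewrite jl (leq_trans lm mk).
move: gap; rewrite psumS !psumB /=; have := pre j (ltnW (ltn_ord j)); lra.
Qed.

Lemma transfer_indices a b (k0 : 'I_n) : prefix_majorized a b -> a k0 != b k0 ->
  exists j k : 'I_n, [/\ (j < k)%N, a j < b j, b k < a k &
                         forall l : 'I_n, (j < l < k)%N -> b l = a l].
Proof.
move=> [pre tot] ab0; pose d l := b l - a l.
have [k1 hk1] : exists k, b k < a k.
  apply/existsP; apply: contraTT ab0 => /existsPn ab; rewrite negbK.
  have d_ge0 l : 0 <= d l by rewrite subr_ge0 leNgt ab.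
  have sum_d : \sum_l d l = 0 by rewrite -psum_total psumB tot subrr.
  by rewrite eq_sym -subr_eq0 -/(d k0) (psumr_eq0P (fun l _ => d_ge0 l) sum_d).
have [k hk kmin] := @arg_minnP _ k1 (fun k => b k < a k) val hk1.
have [j1 hj1] : exists j : 'I_n, (j < k)%N && (a j < b j).
  apply/existsP; apply: contraTT (pre k.+1 (ltn_ord k)) => /existsPn ab.
  rewrite -ltNge -subr_lt0 -psumB psumS.
  have : psum d k <= 0.
    by apply: sumr_le0 => l lk; rewrite subr_le0 leNgt; move: (ab l); rewrite lk.
  by rewrite /d; move: hk; rewrite -subr_lt0; lra.
have [j /andP[jk hj] jmax] :=
  @arg_maxnP _ j1 (fun j : 'I_n => (j < k)%N && (a j < b j)) val hj1.
exists j, k; split=> // l /andP[jl lk].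
apply/eqP; rewrite eq_le !leNgt; apply/andP; split; apply/negP => h.
  by have /= := jmax l; rewrite lk h leqNgt jl => /(_ isT).
by have /= := kmin l h; rewrite leqNgt lk.
Qed.

Lemma transfer_step a b (j k : 'I_n) :
  (forall l, 0 <= a l) -> (forall l, 0 <= b l) -> prefix_majorized a b ->
  (j < k)%N -> a k <= a j -> a j < b j -> b k < a k ->
  (forall l : 'I_n, (j < l < k)%N -> b l = a l) ->
  exists b', [/\ spread j k b' b, forall l, 0 <= b' l, prefix_majorized a b' &
                 (#|[pred l | a l != b' l]| < #|[pred l | a l != b l]|)%N].
Proof.
move=> a0 b0 ab jk akj hj hk mid.
have jnk : j != k by rewrite -val_eqE neq_ltn jk.
set d := Num.min (b j - a j) (a k - b k).
have d_gt0 : 0 < d by rewrite lt_min !subr_gt0 hj hk.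
have dj : d <= b j - a j by rewrite ge_min lexx.
have dk : d <= a k - b k by rewrite ge_min lexx orbT.
exists (transfer b j k d); split.
- by apply: transfer_spread => //; [exact: ltW | lra].
- move=> l; have [->|lj] := eqVneq l j; first by rewrite transfer_l //; have := a0 j; lra.
  have [->|lk] := eqVneq l k; first by rewrite transfer_r //; have := b0 k; lra.
  by rewrite transfer_out.
- exact: transfer_prefix_majorized.
- apply: proper_card; apply/properP; split.
    apply/subsetP => l; rewrite !inE.
    have [->|lj] := eqVneq l j; first by rewrite (lt_eqF hj).
    have [->|lk] := eqVneq l k; first by rewrite (gt_eqF hk).
    by rewrite transfer_out.
  have [djk|djk] := lerP (b j - a j) (a k - b k).
    exists j; first by rewrite inE lt_eqF.
    by rewrite inE negbK transfer_l // /d (min_l djk); apply/eqP; ring.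
  exists k; first by rewrite inE gt_eqF.
  by rewrite inE negbK transfer_r // /d (min_r (ltW djk)); apply/eqP; ring.
Qed.

Lemma spread_antitone_prefix_majorized F a b : spread_antitone F ->
  (forall k l : 'I_n, (k <= l)%N -> a l <= a k) ->
  (forall l, 0 <= a l) -> (forall l, 0 <= b l) -> prefix_majorized a b -> F b <= F a.
Proof.
move=> hF a_dec a0; have [N] := ubnP #|[pred l | a l != b l]|.
elim: N b => // N IH b ltN b0 ab.
have [k0 /= ab0|eq_ab] := pickP [pred l | a l != b l]; last first.
  have -> // : b = a.
  by apply: functional_extensionality => l; apply/esym/eqP/negbFE/eq_ab.
have [j [k [jk hj hk mid]]] := transfer_indices ab ab0.
have [b' [sp b'0 ab' lt_b']] := transfer_step a0 b0 ab jk (a_dec _ _ (ltnW jk)) hj hk mid.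
exact: le_trans (hF _ _ _ _ b'0 b0 sp) (IH _ (leq_trans lt_b' ltN) b'0 ab').
Qed.

Definition sorted_desc (v : 'I_n -> R) : seq R :=
  sort (fun x y : R => y <= x) [seq v i | i <- enum 'I_n].

Definition ranked v (k : 'I_n) : R := nth 0 (sorted_desc v) k.

Lemma size_sorted_desc v : size (sorted_desc v) = n.
Proof. by rewrite size_sort size_map size_enum_ord. Qed.

Lemma ranked_perm v : exists s : 'S_n, ranked v = v \o s.
Proof.
have /tuple_permP[s hs] : perm_eq (sorted_desc v) [tuple v i | i < n] by rewrite perm_sort.
exists s; apply: functional_extensionality => i.
by rewrite /ranked hs -tnth_nth !tnth_mktuple.
Qed.

Lemma ranked_nonincr v (k l : 'I_n) : (k <= l)%N -> ranked v l <= ranked v k.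
Proof.
move=> kl; apply: (@sorted_leq_nth _ (fun x y : R => y <= x));
  rewrite ?inE ?size_sorted_desc //.
- by move=> x y z /= yx zy; apply: le_trans zy yx.
- by apply: sort_sorted => x y; apply: le_total.
Qed.

Lemma psum_ranked v m : (m <= n)%N -> psum (ranked v) m = sum_largest m v.
Proof.
move=> mn; rewrite /sum_largest -/(sorted_desc v) (big_nth 0).
rewrite size_takel ?size_sorted_desc // big_mkord (big_ord_widen n _ mn).
by apply: eq_bigr => k km; rewrite nth_take.
Qed.

Lemma spread_antitone_schur_concave F : spread_antitone F -> schur_concave F.
Proof.
move=> hF a b a0 b0 [maj tot].
have [sa ra] := ranked_perm a; have [sb rb] := ranked_perm b.
rewrite -(spread_antitone_perm sa hF a0) -(spread_antitone_perm sb hF b0) -ra -rb.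
apply: spread_antitone_prefix_majorized => //.
- exact: ranked_nonincr.
- by move=> l; rewrite ra; apply: a0.
- by move=> l; rewrite rb; apply: b0.
split=> [m mn|]; first by rewrite !psum_ranked ?maj.
have sum_perm c (s : 'S_n) : \sum_k c (s k) = \sum_k c k := esym (reindex_perm s).
by rewrite !psum_total ra rb !sum_perm.
Qed.

End Spread.

Section Moments.
Variable R : numDomainType.
Implicit Types c d : R.

(* [moment (x ^+ 2) e] is the expectation of (x r)^e for a Rademacher sign r. *)
Definition moment c (e : nat) : R := if odd e then 0 else c ^+ e./2.

Lemma moment0 c : moment c 0 = 1.
Proof. by rewrite /moment /= expr0. Qed.

Lemma momentS2 c e : moment c e.+2 = c * moment c e.
Proof. by rewrite /moment /= negbK; case: odd; rewrite ?mulr0 ?exprS. Qed.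

Lemma moment_ge0 c e : 0 <= c -> 0 <= moment c e.
Proof. by move=> c0; rewrite /moment; case: odd; rewrite ?exprn_ge0. Qed.

Lemma momentM c d e : moment c e * moment d e = moment (c * d) e.
Proof. by rewrite /moment; case: odd; rewrite ?mul0r ?exprMn. Qed.

Lemma momentS_mul c d e : moment c e.+1 * moment d e = 0.
Proof. by rewrite /moment /=; case: odd; rewrite ?mul0r ?mulr0. Qed.

Lemma moment_le c d e : 0 <= c -> c <= d -> moment c e <= moment d e.
Proof.
by move=> c0 cd; rewrite /moment; case: odd; rewrite // lerXn2r ?nnegrE ?(le_trans c0).
Qed.

End Moments.

Lemma sign_average_exp (R : numFieldType) (x : R) e :
  2^-1 * \sum_(s : bool) (x * rsign s) ^+ e = moment (x ^+ 2) e.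
Proof.
rewrite big_bool /= /rsign /moment mulr1 exprMn -signr_odd.
case: (boolP (odd e)) => [_|even_e]; first by rewrite expr1 mulrN1 subrr mulr0.
rewrite expr0 mulr1 -exprM mul2n -[in x ^+ e](odd_double_half e) (negbTE even_e).
have half_double (y : R) : 2^-1 * (y + y) = y.
  by rewrite -mulr2n -[y *+ 2]mulr_natl mulKf // pnatr_eq0.
exact: half_double.
Qed.

Section CoefficientPredicates.
Variables (R : numDomainType) (n : nat).

Definition nneg_coef : {pred {mpoly R[n]}} :=
  [pred p | all (fun m => 0 <= p@_m) (msupp p)].

Lemma nneg_coefP p : reflect (forall m, 0 <= p@_m) (p \in nneg_coef).
Proof.
apply: (iffP allP) => [h m|h m _]; last exact: h.
by have [/h //|/memN_msupp_eq0 ->] := boolP (m \in msupp p).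
Qed.

Fact nneg_coef_semiring_closed : semiring_closed nneg_coef.
Proof.
split; split.
- by apply/nneg_coefP => m; rewrite mcoeff0.
- move=> p q /nneg_coefP p0 /nneg_coefP q0.
  by apply/nneg_coefP => m; rewrite mcoeffD addr_ge0.
- by apply/nneg_coefP => m; rewrite mcoeff1 ler0n.
- move=> p q /nneg_coefP p0 /nneg_coefP q0; apply/nneg_coefP => m.
  by rewrite mcoeffM; apply: sumr_ge0 => k _; apply: mulr_ge0.
Qed.

HB.instance Definition _ :=
  GRing.isSemiringClosed.Build {mpoly R[n]} nneg_coef nneg_coef_semiring_closed.

Definition avoids (i j : 'I_n) : {pred {mpoly R[n]}} :=
  [pred p | all (fun m : 'X_{1..n} => (m i == 0%N) && (m j == 0%N)) (msupp p)].

Fact avoids_subring_closed i j : subring_closed (avoids i j).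
Proof.
split.
- by apply/allP => m; rewrite msupp1 inE => /eqP ->; rewrite !mnm0E.
- move=> p q /allP p_ij /allP q_ij; apply/allP => m /msuppB_le.
  by rewrite mem_cat => /orP[/p_ij|/q_ij].
- move=> p q /allP p_ij /allP q_ij; apply/allP => m.
  case/msuppM_le/allpairsP => -[m1 m2] [/= /p_ij + /q_ij + ->].
  by rewrite !mnmDE => /andP[/eqP-> /eqP->] /andP[/eqP-> /eqP->].
Qed.

HB.instance Definition _ i j :=
  GRing.isSubringClosed.Build {mpoly R[n]} (avoids i j) (avoids_subring_closed i j).

Lemma nneg_coefX m : 'X_[m] \in nneg_coef.
Proof. by apply/nneg_coefP => m'; rewrite mcoeffX ler0n. Qed.

Lemma avoidsX i j k : k != i -> k != j -> 'X_k \in avoids i j.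
Proof.
move=> ki kj; apply/allP => m; rewrite msuppX inE => /eqP ->.
by rewrite !mnm1E (negbTE ki) (negbTE kj).
Qed.

Lemma avoidsP i j p m : p \in avoids i j -> m \in msupp p -> m i = 0%N /\ m j = 0%N.
Proof. by move=> /allP p_ij /p_ij /andP[/eqP-> /eqP->]. Qed.

End CoefficientPredicates.

Arguments nneg_coef {R n}.

Section Expectation.
Variables (R : numDomainType) (n : nat) (a : 'I_n -> R).
Implicit Types (p q : {mpoly R[n]}) (m : 'X_{1..n}).

Definition mmoment m : R := \prod_i moment (a i) (m i).

(* When [a = x^2], [expect a p] is the expectation of p(x_1 r_1, ..., x_n r_n)
   (see sign_average_meval).  It is parametrized by [a] rather than [x] since
   Schur-concavity is tested at arbitrary [a >= 0] and R has no square roots. *)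
Definition expect p : R := \sum_(m <- msupp p) p@_m * mmoment m.

Lemma expectE p (s : seq 'X_{1..n}) : uniq s -> {subset msupp p <= s} ->
  expect p = \sum_(m <- s) p@_m * mmoment m.
Proof.
move=> s_uniq supp_s; rewrite (bigID (mem (msupp p))) /= [X in _ + X]big1 ?addr0.
  rewrite -big_filter; apply/perm_big/uniq_perm; rewrite ?msupp_uniq ?filter_uniq //.
  by move=> m; rewrite mem_filter andb_idr // => /supp_s.
by move=> m /memN_msupp_eq0 ->; rewrite mul0r.
Qed.

Lemma expectD p q : expect (p + q) = expect p + expect q.
Proof.
pose s := undup (msupp p ++ msupp q ++ msupp (p + q)).
have sub_s r : r \in [:: p; q; p + q] -> {subset msupp r <= s}.
  by rewrite !inE => /or3P[] /eqP-> m m_supp; rewrite mem_undup !mem_cat m_supp ?orbT.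
rewrite !(@expectE _ s) ?undup_uniq //; try by apply: sub_s; rewrite !inE eqxx ?orbT.
by rewrite -big_split; apply: eq_bigr => m _; rewrite mcoeffD mulrDl.
Qed.

Lemma expectZ c p : expect (c *: p) = c * expect p.
Proof.
rewrite (@expectE _ (msupp p)) ?msupp_uniq //; last exact: msuppZ_le.
by rewrite /expect big_distrr; apply: eq_bigr => m _; rewrite mcoeffZ -mulrA.
Qed.

Lemma expect0 : expect 0 = 0.
Proof. by rewrite -(scale0r 0) expectZ mul0r. Qed.

Lemma expect_sum (I : Type) (r : seq I) (P : pred I) (F : I -> {mpoly R[n]}) :
  expect (\sum_(i <- r | P i) F i) = \sum_(i <- r | P i) expect (F i).
Proof. exact: (big_morph _ expectD expect0). Qed.

Lemma expectX m : expect 'X_[m] = mmoment m.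
Proof. by rewrite /expect msuppX big_seq1 mcoeffX eqxx mul1r. Qed.

Lemma mmomentD2 m i : mmoment (m + U_(i) *+ 2) = a i * mmoment m.
Proof.
rewrite /mmoment (bigD1 i) //= [in RHS](bigD1 i) //= mulrA.
rewrite mnmDE mulmnE mnm1E eqxx mul1n addn2 momentS2; congr (_ * _).
by apply: eq_bigr => k ki; rewrite mnmDE mulmnE mnm1E eq_sym (negbTE ki) mul0n addn0.
Qed.

Lemma expect_mulX2 p i : expect (p * 'X_i ^+ 2) = a i * expect p.
Proof.
rewrite {1}(mpolyE p) mulr_suml expect_sum [in RHS]/expect big_distrr.
apply: eq_bigr => m _.
by rewrite -scalerAl expectZ mpolyXn -mpolyXD expectX mmomentD2 mulrCA.
Qed.

Lemma expect_ge0 p : (forall i, 0 <= a i) -> p \in nneg_coef -> 0 <= expect p.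
Proof.
move=> a0 /nneg_coefP p0; apply: sumr_ge0 => m _.
by rewrite mulr_ge0 // prodr_ge0 // => i _; apply: moment_ge0.
Qed.

Lemma mmoment_pair (i j : 'I_n) e1 e2 m : i != j -> m i = 0%N -> m j = 0%N ->
  mmoment (U_(i) *+ e1 + U_(j) *+ e2 + m) = moment (a i) e1 * moment (a j) e2 * mmoment m.
Proof.
move=> ij mi mj.
have mE k : (U_(i) *+ e1 + U_(j) *+ e2 + m)%MM k = ((i == k) * e1 + (j == k) * e2 + m k)%N.
  by rewrite !mnmDE !mulmnE !mnm1E.
rewrite /mmoment (bigD1 i) //= [in RHS](bigD1 i) //= (bigD1 j) 1?eq_sym //=.
rewrite [in RHS](bigD1 j) 1?eq_sym //= !mE eqxx (negbTE ij) eq_sym (negbTE ij) eqxx mi mj.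
rewrite !mul1n !mul0n !addn0 add0n !moment0 !mul1r !mulrA; congr (_ * _).
by apply: eq_bigr => k /andP[ki kj]; rewrite mE !(eq_sym _ k) (negbTE ki) (negbTE kj).
Qed.

Lemma expect_mulXX (i j : 'I_n) e1 e2 q : i != j -> q \in avoids i j ->
  expect ('X_i ^+ e1 * 'X_j ^+ e2 * q) = moment (a i) e1 * moment (a j) e2 * expect q.
Proof.
move=> ij q_ij; rewrite {1}(mpolyE q) mulr_sumr expect_sum [in RHS]/expect big_distrr.
rewrite !big_seq; apply: eq_bigr => m /(avoidsP q_ij)[mi mj].
by rewrite -scalerAr expectZ !mpolyXn -!mpolyXD expectX mmoment_pair // mulrCA.
Qed.

Definition expect_equiv p q := forall r, expect (r * p) = expect (r * q).

Lemma expect_equivX p q k : expect_equiv p q -> expect_equiv (p ^+ k) (q ^+ k).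
Proof.
move=> pq; elim: k => [|k IH] r; first by rewrite !expr0.
by rewrite exprSr mulrA pq -mulrA [p ^+ k * q]mulrC mulrA IH -mulrA -exprS.
Qed.

End Expectation.

Lemma expect_avoids_eq (R : numDomainType) n (a b : 'I_n -> R) (i j : 'I_n) q :
  q \in avoids i j -> (forall k, k != i -> k != j -> b k = a k) ->
  expect b q = expect a q.
Proof.
move=> q_ij ab; rewrite /expect !big_seq; apply: eq_bigr => m /(avoidsP q_ij)[mi mj].
congr (_ * _); apply: eq_bigr => k _.
have [->|ki] := eqVneq k i; first by rewrite mi !moment0.
have [->|kj] := eqVneq k j; first by rewrite mj !moment0.
by rewrite ab.
Qed.

(* The value of [expect] on (X_i X_j)^m (X_i + X_j)^h (expect_pair) in terms of
   s = a_i + a_j and p = a_i a_j: expanding (X_i + X_j)^(2k) as (s + 2 X_i X_j)^k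
   shows it is a polynomial in s and p with nonnegative coefficients. *)
Definition pair_moment (R : numDomainType) (s p : R) (m h : nat) : R :=
  if odd h then 0 else
  \sum_(t < h./2.+1) 'C(h./2, t)%:R * s ^+ (h./2 - t) * 2 ^+ t * moment p (m + t).

Lemma pair_moment_le (R : numDomainType) (s p p' : R) m h :
  0 <= s -> 0 <= p' -> p' <= p -> pair_moment s p' m h <= pair_moment s p m h.
Proof.
move=> s0 p'0 p'p; rewrite /pair_moment; case: odd => //.
apply: ler_sum => t _; apply: ler_wpM2l; last exact: moment_le.
by rewrite !mulr_ge0 ?exprn_ge0.
Qed.

Section PairExpectation.
Variables (R : numDomainType) (n : nat) (a : 'I_n -> R) (i j : 'I_n).
Hypothesis ij : i != j.

Lemma expect_equiv_sqr :
  expect_equiv a (('X_i + 'X_j) ^+ 2) ((a i + a j)%:MP + ('X_i * 'X_j) *+ 2).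
Proof.
move=> r; rewrite sqrrD !mulrDr !expectD !expect_mulX2.
by rewrite [r * _%:MP]mulrC mul_mpolyC expectZ; ring.
Qed.

Lemma expect_pair m h q : q \in avoids i j ->
  expect a (('X_i * 'X_j) ^+ m * ('X_i + 'X_j) ^+ h * q) =
  pair_moment (a i + a j) (a i * a j) m h * expect a q.
Proof.
move=> q_ij; set S := 'X_i + 'X_j; set D := 'X_i * 'X_j; set k := h./2.
have -> : D ^+ m * S ^+ h * q = D ^+ m * q * S ^+ odd h * (S ^+ 2) ^+ k.
  by rewrite -exprM mul2n -[in S ^+ h](odd_double_half h) exprD; ring.
rewrite (expect_equivX _ expect_equiv_sqr) [_ ^+ k]exprDn mulr_sumr expect_sum /pair_moment.
have termE t : ((a i + a j)%:MP ^+ (k - t) * (D *+ 2) ^+ t) *+ 'C(k, t) =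
               ('C(k, t)%:R * (a i + a j) ^+ (k - t) * 2 ^+ t) *: D ^+ t.
  rewrite -(scaler_nat 2 D) exprZn -rmorphXn /= mul_mpolyC !scalerA -scaler_nat.
  by rewrite scalerA mulrA.
under eq_bigr do rewrite termE -scalerAr expectZ.
case: (boolP (odd h)) => [odd_h|even_h] /=.
  rewrite mul0r; apply: big1 => t _.
  have -> : D ^+ m * q * S ^+ true * D ^+ t =
      'X_i ^+ (m + t).+1 * 'X_j ^+ (m + t) * q + 'X_i ^+ (m + t) * 'X_j ^+ (m + t).+1 * q.
    by rewrite /S /D !exprS !exprD !exprMn; ring.
  rewrite expectD !expect_mulXX // momentS_mul [X in _ + X * _]mulrC momentS_mul.
  by rewrite !mul0r addr0 mulr0.
rewrite mulr_suml; apply: eq_bigr => t _.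
have -> : D ^+ m * q * S ^+ false * D ^+ t = 'X_i ^+ (m + t) * 'X_j ^+ (m + t) * q.
  by rewrite /D !exprD !exprMn; ring.
by rewrite expect_mulXX // momentM mulrA.
Qed.

End PairExpectation.

Lemma natmul_rearrange (T : comNzRingType) (D X Z W : T) e h l c1 c2 :
  (D *+ 2) ^+ e * ((X * Z) *+ 2) ^+ h *+ c1 * W ^+ l *+ c2 =
  (2 ^ e * 2 ^ h * c1 * c2)%:R * (D ^+ e * X ^+ h * (Z ^+ h * W ^+ l)).
Proof.
rewrite mulr_natl !exprMn_n exprMn !(mulrnAl, mulrnAr) -!mulrnA.
by congr (_ *+ _); rewrite ?mulrA // !mulnA [(2 ^ e * 2 ^ h)%N]mulnC.
Qed.

Section ChaosPolynomial.
Variables (R : numDomainType) (n : nat).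

Definition chaos_poly : {mpoly R[n]} := \sum_(u < n) \sum_(v < n | u != v) 'X_u * 'X_v.

Variables (i j : 'I_n).
Hypothesis ij : i != j.

Definition outside k := (k != i) && (k != j).

Definition outside_sum : {mpoly R[n]} := \sum_(u | outside u) 'X_u.

Definition outside_chaos : {mpoly R[n]} :=
  \sum_(u | outside u) \sum_(v | outside v && (u != v)) 'X_u * 'X_v.

Lemma outside_sum_avoids : outside_sum \in avoids i j.
Proof. by apply: rpred_sum => u /andP[ui uj]; apply: avoidsX. Qed.

Lemma outside_chaos_avoids : outside_chaos \in avoids i j.
Proof.
apply: rpred_sum => u /andP[ui uj]; apply: rpred_sum => v /andP[/andP[vi vj] _].
by rewrite rpredM ?avoidsX.
Qed.

Lemma outside_sum_nneg : outside_sum \in nneg_coef.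
Proof. by apply: rpred_sum => u _; apply: nneg_coefX. Qed.

Lemma outside_chaos_nneg : outside_chaos \in nneg_coef.
Proof.
by apply: rpred_sum => u _; apply: rpred_sum => v _; rewrite rpredM ?nneg_coefX.
Qed.

Lemma chaos_poly_split : chaos_poly =
  ('X_i * 'X_j) *+ 2 + (('X_i + 'X_j) * outside_sum) *+ 2 + outside_chaos.
Proof.
have ji : j != i by rewrite eq_sym.
pose row u : {mpoly R[n]} := \sum_(v < n | u != v) 'X_u * 'X_v.
have row_i : row i = 'X_i * 'X_j + 'X_i * outside_sum.
  rewrite /row (bigD1 j) //= mulr_sumr; congr (_ + _).
  by apply: eq_bigl => v; rewrite /outside eq_sym.
have row_j : row j = 'X_j * 'X_i + 'X_j * outside_sum.
  rewrite /row (bigD1 i) //= mulr_sumr; congr (_ + _).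
  by apply: eq_bigl => v; rewrite /outside eq_sym andbC.
have rows_out : \sum_(u | outside u) row u =
    outside_sum * 'X_i + outside_sum * 'X_j + outside_chaos.
  rewrite /outside_sum /outside_chaos !mulr_suml -!big_split /=.
  apply: eq_bigr => u /andP[ui uj].
  rewrite /row (bigD1 i) // (bigD1 j) /=; last by rewrite uj ji.
  by rewrite addrA; congr (_ + _ + _); apply: eq_bigl => v; rewrite /outside -andbA andbC.
have -> : chaos_poly = \sum_u row u by [].
rewrite (bigD1 i) // (bigD1 j) //= row_i row_j rows_out !mulr2n; ring.
Qed.

Lemma expect_chaos_poly_exp (a : 'I_n -> R) q :
  expect a (chaos_poly ^+ q) =
  \sum_(l < q.+1) \sum_(h < (q - l).+1)
    (2 ^ (q - l - h) * 2 ^ h * 'C(q - l, h) * 'C(q, l))%:R *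
    pair_moment (a i + a j) (a i * a j) (q - l - h) h *
    expect a (outside_sum ^+ h * outside_chaos ^+ l).
Proof.
rewrite chaos_poly_split exprDn expect_sum; apply: eq_bigr => l _.
rewrite exprDn mulr_suml -sumrMnl expect_sum; apply: eq_bigr => h _.
rewrite natmul_rearrange mulr_natl -scaler_nat expectZ expect_pair ?mulrA //.
by rewrite rpredM ?rpredX ?outside_sum_avoids ?outside_chaos_avoids.
Qed.

End ChaosPolynomial.

Lemma chaos_spread_antitone (R : realDomainType) n q :
  spread_antitone (fun a : 'I_n -> R => expect a (chaos_poly R n ^+ q)).
Proof.
move=> a b i j a0 b0 [ij ab_out sum_ij prod_ij] /=.
rewrite !(expect_chaos_poly_exp ij); apply: ler_sum => l _; apply: ler_sum => h _.
set Q := _ ^+ h * _ ^+ l.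
have Q_ij : Q \in avoids i j.
  by rewrite rpredM ?rpredX ?outside_sum_avoids ?outside_chaos_avoids.
have Q_nneg : Q \in nneg_coef.
  by rewrite rpredM ?rpredX ?outside_sum_nneg ?outside_chaos_nneg.
rewrite (expect_avoids_eq Q_ij ab_out) sum_ij; apply: ler_wpM2r; first exact: expect_ge0.
by apply: ler_wpM2l => //; apply: pair_moment_le; rewrite ?addr_ge0 ?mulr_ge0.
Qed.

Lemma chaos_meval (R : numDomainType) n (x : 'I_n -> R) r :
  chaos x r = (chaos_poly R n).@[fun i => x i * rsign (r i)].
Proof.
rewrite /chaos /chaos_poly rmorph_sum; apply: eq_bigr => u _.
rewrite rmorph_sum; apply: eq_bigr => v _.
by rewrite rmorphM /= !mevalXU; ring.
Qed.

Lemma sign_average_mmoment (R : numFieldType) n (x : 'I_n -> R) (m : 'X_{1..n}) :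
  (2 ^+ n)^-1 * \sum_(r : {ffun 'I_n -> bool}) \prod_i (x i * rsign (r i)) ^+ m i =
  mmoment (fun i => x i ^+ 2) m.
Proof.
rewrite -(bigA_distr_bigA (fun i s => (x i * rsign s) ^+ m i)).
have -> : (2 ^+ n)^-1 = \prod_(i < n) (2^-1 : R) by rewrite prodr_const card_ord exprVn.
by rewrite -big_split /mmoment; apply: eq_bigr => i _; apply: sign_average_exp.
Qed.

Lemma sign_average_meval (R : numFieldType) n (x : 'I_n -> R) (p : {mpoly R[n]}) :
  (2 ^+ n)^-1 * \sum_(r : {ffun 'I_n -> bool}) p.@[fun i => x i * rsign (r i)] =
  expect (fun i => x i ^+ 2) p.
Proof.
under eq_bigr do rewrite mevalE.
rewrite exchange_big /= big_distrr /expect; apply: eq_bigr => m _.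
by rewrite -big_distrr /= mulrCA sign_average_mmoment.
Qed.

Lemma Rq_expect (R : numFieldType) n q (x : 'I_n -> R) :
  Rq q x = expect (fun i => x i ^+ 2) (chaos_poly R n ^+ q).
Proof.
rewrite /Rq -sign_average_meval; congr (_ * _); apply: eq_bigr => r _.
by rewrite chaos_meval rmorphXn.
Qed.

Unset Implicit Arguments.

Theorem theorem2 (R : realFieldType) (n q : nat) :
  (1 <= n)%N -> (1 <= q)%N ->
  exists f : ('I_n -> R) -> R,
    schur_concave f /\
    (forall x : 'I_n -> R, Rq q x = f (fun i => x i ^+ 2)).
Proof.
move=> _ _; exists (fun a => expect a (chaos_poly R n ^+ q)); split.
  exact/spread_antitone_schur_concave/chaos_spread_antitone.
by move=> x; rewrite Rq_expect.
Qed.
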